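(* Let $\mathcal{H}$ be a Hilbert space and let $\{\psi_k\}_{k\in\mathbb{Z}^d}$ be a Bessel sequence in $\mathcal{H}$ that is complete (its linear span is dense in $\mathcal{H}$). Let $n_0\in\mathbb{Z}^d$. Then $\{\psi_k+\psi_{k+n_0}\}_{k\in\mathbb{Z}^d}$ is complete in $\mathcal{H}$.
   Context: A sequence $\{\psi_k\}$ is Bessel if there is $B>0$ with $\sum_k|\langle h,\psi_k\rangle|^2\le B\|h\|^2$ for all $h\in\mathcal{H}$. *)

From Stdlib Require Import Reals List ZArith.
From Stdlib Require Fin.
Import ListNotations.
Open Scope R_scope.

(** Complex numbers as pairs (real part, imaginary part). *)
Definition C : Type := (R * R)%type.
Definition C0 : C := (0, 0).
Definition C1 : C := (1, 0).
Definition Cadd (a b : C) : C := (fst a + fst b, snd a + snd b).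
Definition Cmul (a b : C) : C :=
  (fst a * fst b - snd a * snd b, fst a * snd b + snd a * fst b).
Definition Cconj (a : C) : C := (fst a, - snd a).
Definition Cmod2 (a : C) : R := fst a * fst a + snd a * snd a.

Record HilbertSpace := {
  hs_car :> Type;
  hs_zero : hs_car;
  hs_add : hs_car -> hs_car -> hs_car;
  hs_opp : hs_car -> hs_car;
  hs_scal : C -> hs_car -> hs_car;
  hs_inner : hs_car -> hs_car -> C;
  hs_add_assoc : forall x y z, hs_add x (hs_add y z) = hs_add (hs_add x y) z;
  hs_add_comm : forall x y, hs_add x y = hs_add y x;
  hs_add_0 : forall x, hs_add x hs_zero = x;
  hs_add_opp : forall x, hs_add x (hs_opp x) = hs_zero;
  hs_scal_assoc : forall a b x, hs_scal a (hs_scal b x) = hs_scal (Cmul a b) x;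
  hs_scal_1 : forall x, hs_scal C1 x = x;
  hs_scal_distr_v : forall a x y, hs_scal a (hs_add x y) = hs_add (hs_scal a x) (hs_scal a y);
  hs_scal_distr_s : forall a b x, hs_scal (Cadd a b) x = hs_add (hs_scal a x) (hs_scal b x);
  hs_inner_add_l : forall x y z, hs_inner (hs_add x y) z = Cadd (hs_inner x z) (hs_inner y z);
  hs_inner_scal_l : forall a x y, hs_inner (hs_scal a x) y = Cmul a (hs_inner x y);
  hs_inner_conj : forall x y, hs_inner y x = Cconj (hs_inner x y);
  hs_inner_pos : forall x, 0 <= fst (hs_inner x x);
  hs_inner_def : forall x, hs_inner x x = C0 -> x = hs_zero;
  hs_complete : forall u : nat -> hs_car,
    (forall eps, 0 < eps -> exists N, forall m n, (N <= m)%nat -> (N <= n)%nat ->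
        sqrt (fst (hs_inner (hs_add (u m) (hs_opp (u n))) (hs_add (u m) (hs_opp (u n))))) < eps) ->
    exists l, forall eps, 0 < eps -> exists N, forall n, (N <= n)%nat ->
        sqrt (fst (hs_inner (hs_add (u n) (hs_opp l)) (hs_add (u n) (hs_opp l)))) < eps
}.

Arguments hs_zero {_}.
Arguments hs_add {_}.
Arguments hs_opp {_}.
Arguments hs_scal {_}.
Arguments hs_inner {_}.

Definition hs_norm {H : HilbertSpace} (x : H) : R := sqrt (fst (hs_inner x x)).
Definition hs_sub {H : HilbertSpace} (x y : H) : H := hs_add x (hs_opp y).

Definition lincomb {H : HilbertSpace} {I : Type} (psi : I -> H) (L : list (C * I)) : H :=
  fold_right (fun ck acc => hs_add (hs_scal (fst ck) (psi (snd ck))) acc) hs_zero L.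

Definition sumR (l : list R) : R := fold_right Rplus 0 l.

(** Bessel: there is B > 0 with sum_k |<h,psi_k>|^2 <= B ||h||^2 for all h
    (the sum of nonnegative terms over I bounded via all finite subsets). *)
Definition Bessel {H : HilbertSpace} {I : Type} (psi : I -> H) : Prop :=
  exists B : R, 0 < B /\
    forall (h : H) (F : list I), NoDup F ->
      sumR (map (fun k => Cmod2 (hs_inner h (psi k))) F) <= B * (hs_norm h) ^ 2.

Definition complete_seq {H : HilbertSpace} {I : Type} (psi : I -> H) : Prop :=
  forall (h : H) (eps : R), 0 < eps ->
    exists L : list (C * I), hs_norm (hs_sub h (lincomb psi L)) < eps.

Definition Zd (d : nat) : Type := Fin.t d -> Z.
Definition zd_add {d : nat} (k n : Zd d) : Zd d := fun i => (k i + n i)%Z.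

From Pilot Require Import Defs.
From Stdlib Require Import Reals List ZArith Lra Lia Classical FunctionalExtensionality FinFun.
Import ListNotations.
Open Scope R_scope.

(* Write e_P = psi_(k + P n0).  Telescoping along the orbit k, k+n0, k+2n0, ...
   gives  psi_k - (-1)^P e_P = sum_(Q<P) (-1)^Q phi_(k+Q n0),  so every such
   difference lies in the span of phi.  Averaging over P = 1..N,
       psi_k - (1/N) sum_(P=1..N) (-1)^P e_P   lies in span(phi).
   When n0 <> 0 the e_P are distinct members of the Bessel family, and the
   Bessel bound B yields  || sum_(P=1..N) (-1)^P e_P ||^2 <= B N,  so the
   averaged error is at most sqrt (B/N) -> 0: psi_k is in the closed span of
   phi.  (When n0 = 0, phi_k = 2 psi_k.)  Density of span(psi) then transfers
   to span(phi). *)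

Lemma pair_eq (p q : Defs.C) : fst p = fst q -> snd p = snd q -> p = q.
Proof. destruct p, q; simpl; intros; subst; reflexivity. Qed.

Lemma nonneg_quadratic_discriminant (a b c : R) :
  (forall t, 0 <= a + 2 * t * b + t * t * c) -> b ^ 2 <= a * c.
Proof.
  intro Hq.
  assert (Ha : 0 <= a) by (specialize (Hq 0); lra).
  destruct (Rtotal_order c 0) as [Hc | [Hc | Hc]].
  - (* c < 0 is impossible: adding the values at s and -s gives s^2 (-c) <= a. *)
    set (s := a / - c + 1).
    assert (Hquot : 0 <= a / - c)
      by (unfold Rdiv; apply Rmult_le_pos; [lra | left; apply Rinv_0_lt_compat; lra]).
    assert (Hs : 1 <= s) by (unfold s; lra).
    pose proof (Hq s) as Hp. pose proof (Hq (- s)) as Hm.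
    assert (Hsq : s * s * (- c) <= a) by nra.
    assert (Has : a = (s - 1) * (- c)) by (unfold s; field; lra).
    nra.
  - subst c. destruct (Req_dec b 0) as [Hb | Hb].
    + subst b. lra.
    + specialize (Hq (- (a + 1) / (2 * b))).
      replace (a + 2 * (- (a + 1) / (2 * b)) * b + - (a + 1) / (2 * b) * (- (a + 1) / (2 * b)) * 0)
        with (-1) in Hq by (field; exact Hb). lra.
  - specialize (Hq (- b / c)).
    replace (a + 2 * (- b / c) * b + - b / c * (- b / c) * c) with ((a * c - b * b) / c) in Hq
      by (field; lra).
    assert (Hmul : 0 <= (a * c - b * b) / c * c) by (apply Rmult_le_pos; lra).
    replace ((a * c - b * b) / c * c) with (a * c - b * b) in Hmul by (field; lra). lra.
Qed.

Section InnerProduct.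
Variable H : HilbertSpace.
Implicit Types x y z : H.

Lemma inner_zero_l z : hs_inner hs_zero z = C0.
Proof.
  pose proof (hs_inner_add_l H hs_zero hs_zero z) as E.
  rewrite hs_add_0 in E. destruct (hs_inner hs_zero z) as [a b].
  unfold Cadd in E; simpl in E. injection E; intros. unfold C0; f_equal; lra.
Qed.

Lemma inner_opp_l x z :
  hs_inner (hs_opp x) z = (- fst (hs_inner x z), - snd (hs_inner x z)).
Proof.
  pose proof (hs_inner_add_l H x (hs_opp x) z) as E.
  rewrite hs_add_opp, inner_zero_l in E.
  destruct (hs_inner x z) as [a b], (hs_inner (hs_opp x) z) as [c e].
  unfold Cadd, C0 in E; simpl in E. injection E; intros. simpl; f_equal; lra.
Qed.

(* Vectors are determined by their inner products against all vectors;
   this reduces every vector identity to an identity between complex numbers. *)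
Lemma hs_ext x y : (forall z, hs_inner x z = hs_inner y z) -> x = y.
Proof.
  intro E.
  assert (Hdiff : hs_inner (hs_add x (hs_opp y)) (hs_add x (hs_opp y)) = C0).
  { rewrite hs_inner_add_l, E, <- hs_inner_add_l, hs_add_opp. apply inner_zero_l. }
  apply hs_inner_def in Hdiff.
  rewrite <- (hs_add_0 H x), <- (hs_add_opp H y), (hs_add_comm H y),
    hs_add_assoc, Hdiff, hs_add_comm, hs_add_0. reflexivity.
Qed.

Definition re_inner x y : R := fst (hs_inner x y).

Lemma re_inner_sym x y : re_inner x y = re_inner y x.
Proof. unfold re_inner. rewrite (hs_inner_conj H x y). reflexivity. Qed.

Lemma inner_self_real x : snd (hs_inner x x) = 0.
Proof.
  pose proof (hs_inner_conj H x x) as E.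
  destruct (hs_inner x x) as [a b]. unfold Cconj in E; simpl in *.
  injection E; lra.
Qed.

Lemma re_inner_self_nonneg x : 0 <= re_inner x x.
Proof. apply hs_inner_pos. Qed.

Lemma norm_re_inner x : hs_norm x = sqrt (re_inner x x).
Proof. reflexivity. Qed.

Lemma re_inner_add_l x y z : re_inner (hs_add x y) z = re_inner x z + re_inner y z.
Proof. unfold re_inner. rewrite hs_inner_add_l. reflexivity. Qed.

Lemma re_inner_add_r x y z : re_inner z (hs_add x y) = re_inner z x + re_inner z y.
Proof. rewrite !(re_inner_sym z). apply re_inner_add_l. Qed.

Lemma re_inner_rscal_l r x z : re_inner (hs_scal (r, 0) x) z = r * re_inner x z.
Proof. unfold re_inner. rewrite hs_inner_scal_l. unfold Cmul; simpl. ring. Qed.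

Lemma re_inner_rscal_r r x z : re_inner z (hs_scal (r, 0) x) = r * re_inner z x.
Proof. rewrite !(re_inner_sym z). apply re_inner_rscal_l. Qed.

Lemma re_inner_scal_self c x :
  re_inner (hs_scal c x) (hs_scal c x) = Cmod2 c * re_inner x x.
Proof.
  unfold re_inner. rewrite hs_inner_scal_l, hs_inner_conj, hs_inner_scal_l.
  pose proof (inner_self_real x) as Him.
  destruct c as [a b], (hs_inner x x) as [p q]. simpl in *. subst.
  unfold Cmod2. simpl. ring.
Qed.

Lemma cauchy_schwarz x y : re_inner x y ^ 2 <= re_inner x x * re_inner y y.
Proof.
  apply nonneg_quadratic_discriminant. intro t.
  pose proof (re_inner_self_nonneg (hs_add x (hs_scal (t, 0) y))) as P.
  rewrite re_inner_add_l, !re_inner_add_r, !re_inner_rscal_l, !re_inner_rscal_r,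
    (re_inner_sym y x) in P.
  lra.
Qed.

Lemma norm_triangle x y : hs_norm (hs_add x y) <= hs_norm x + hs_norm y.
Proof.
  rewrite !norm_re_inner, re_inner_add_l, !re_inner_add_r, (re_inner_sym y x).
  pose proof (cauchy_schwarz x y) as Hcs.
  pose proof (re_inner_self_nonneg x) as Px. pose proof (re_inner_self_nonneg y) as Py.
  pose proof (sqrt_pos (re_inner x x)) as Sx. pose proof (sqrt_pos (re_inner y y)) as Sy.
  pose proof (pow2_sqrt (re_inner x x) Px) as Ex.
  pose proof (pow2_sqrt (re_inner y y) Py) as Ey.
  set (a := sqrt (re_inner x x)) in *. set (b := sqrt (re_inner y y)) in *.
  assert (Hab : re_inner x y <= a * b).
  { rewrite <- Ex, <- Ey in Hcs. set (q := re_inner x y) in *.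
    destruct (Rle_dec q (a * b)) as [Hle | Hgt]; [exact Hle |].
    apply Rnot_le_lt in Hgt.
    assert (0 <= a * b) by (apply Rmult_le_pos; lra).
    assert (0 < (q - a * b) * (q + a * b)) by (apply Rmult_lt_0_compat; lra).
    nra. }
  rewrite <- (sqrt_square (a + b)) by lra. apply sqrt_le_1_alt. nra.
Qed.

Lemma norm_scal c x : hs_norm (hs_scal c x) = sqrt (Cmod2 c) * hs_norm x.
Proof.
  rewrite !norm_re_inner, re_inner_scal_self, sqrt_mult_alt; [reflexivity |].
  destruct c; unfold Cmod2; simpl; nra.
Qed.

Lemma norm_zero : hs_norm (@hs_zero H) = 0.
Proof. rewrite norm_re_inner. unfold re_inner. rewrite inner_zero_l. apply sqrt_0. Qed.

End InnerProduct.

Ltac vector_identity :=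
  apply hs_ext; intro;
  unfold hs_sub;
  repeat (rewrite hs_inner_add_l || rewrite hs_inner_scal_l
          || rewrite inner_opp_l || rewrite inner_zero_l);
  apply pair_eq; unfold Cadd, Cmul, Defs.C0, Defs.C1; simpl.

Section ClosedSpan.
Variables (H : HilbertSpace) (I : Type) (phi : I -> H).

Definition in_closed_span (y : H) : Prop :=
  forall eps, 0 < eps -> exists L, hs_norm (hs_sub y (lincomb phi L)) < eps.

Lemma lincomb_app L1 L2 :
  lincomb phi (L1 ++ L2) = hs_add (lincomb phi L1) (lincomb phi L2).
Proof.
  induction L1 as [|[c k] L1 IH]; simpl.
  - vector_identity; ring.
  - rewrite IH. vector_identity; ring.
Qed.

Lemma lincomb_scal c L :
  lincomb phi (map (fun p => (Cmul c (fst p), snd p)) L) = hs_scal c (lincomb phi L).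
Proof.
  induction L as [|[a k] L IH]; simpl.
  - vector_identity; ring.
  - rewrite IH. vector_identity; ring.
Qed.

Lemma closed_span_lincomb L : in_closed_span (lincomb phi L).
Proof.
  intros eps He. exists L.
  replace (hs_sub (lincomb phi L) (lincomb phi L)) with (@hs_zero H)
    by (vector_identity; ring).
  rewrite norm_zero. exact He.
Qed.

Lemma closed_span_generator i : in_closed_span (phi i).
Proof.
  replace (phi i) with (lincomb phi [(Defs.C1, i)]) by (simpl; vector_identity; ring).
  apply closed_span_lincomb.
Qed.

Lemma closed_span_add y1 y2 :
  in_closed_span y1 -> in_closed_span y2 -> in_closed_span (hs_add y1 y2).
Proof.
  intros H1 H2 eps He.
  destruct (H1 (eps / 2)) as [L1 E1]; [lra |].
  destruct (H2 (eps / 2)) as [L2 E2]; [lra |].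
  exists (L1 ++ L2). rewrite lincomb_app.
  replace (hs_sub (hs_add y1 y2) (hs_add (lincomb phi L1) (lincomb phi L2)))
    with (hs_add (hs_sub y1 (lincomb phi L1)) (hs_sub y2 (lincomb phi L2)))
    by (vector_identity; ring).
  eapply Rle_lt_trans; [apply norm_triangle | lra].
Qed.

Lemma closed_span_scal c y : in_closed_span y -> in_closed_span (hs_scal c y).
Proof.
  intros Hy eps He.
  set (m := sqrt (Cmod2 c)).
  assert (Hm : 0 <= m) by apply sqrt_pos.
  destruct (Hy (eps / (m + 1))) as [L E]; [apply Rdiv_lt_0_compat; lra |].
  exists (map (fun p => (Cmul c (fst p), snd p)) L). rewrite lincomb_scal.
  replace (hs_sub (hs_scal c y) (hs_scal c (lincomb phi L)))
    with (hs_scal c (hs_sub y (lincomb phi L))) by (vector_identity; ring).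
  rewrite norm_scal. fold m.
  apply Rle_lt_trans with (m * (eps / (m + 1))).
  - apply Rmult_le_compat_l; [exact Hm | left; exact E].
  - apply Rlt_le_trans with ((m + 1) * (eps / (m + 1))).
    + apply Rmult_lt_compat_r; [apply Rdiv_lt_0_compat |]; lra.
    + right. field. lra.
Qed.

Lemma closed_span_limit y :
  (forall eps, 0 < eps -> exists z, in_closed_span z /\ hs_norm (hs_sub y z) < eps) ->
  in_closed_span y.
Proof.
  intros Hlim eps He.
  destruct (Hlim (eps / 2)) as [z [Hz E1]]; [lra |].
  destruct (Hz (eps / 2)) as [L E2]; [lra |].
  exists L.
  replace (hs_sub y (lincomb phi L))
    with (hs_add (hs_sub y z) (hs_sub z (lincomb phi L))) by (vector_identity; ring).
  eapply Rle_lt_trans; [apply norm_triangle | lra].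
Qed.

End ClosedSpan.

Lemma complete_of_closed_span (H : HilbertSpace) (I J : Type)
      (psi : J -> H) (phi : I -> H) :
  (forall j, in_closed_span H I phi (psi j)) ->
  complete_seq psi -> complete_seq phi.
Proof.
  intros Hpsi Hc h.
  apply closed_span_limit. intros eps He.
  destruct (Hc h eps He) as [L EL].
  exists (lincomb psi L). split; [| exact EL]. clear EL.
  induction L as [|[c j] L IH]; simpl.
  - apply (closed_span_lincomb H I phi []).
  - apply closed_span_add; [apply closed_span_scal, Hpsi | exact IH].
Qed.

Lemma sumR_app (l1 l2 : list R) : sumR (l1 ++ l2) = sumR l1 + sumR l2.
Proof. induction l1 as [|a l1 IH]; simpl; [ring | rewrite IH; ring]. Qed.

Lemma sumR_affine_bound {A : Type} (f g : A -> R) (a b : R) (l : list A) :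
  (forall x, f x <= a * g x + b) ->
  sumR (map f l) <= a * sumR (map g l) + b * INR (length l).
Proof.
  intro Hf. induction l as [|x l IH].
  - simpl. lra.
  - change (f x + sumR (map f l) <= a * (g x + sumR (map g l)) + b * INR (S (length l))).
    rewrite S_INR. specialize (Hf x). lra.
Qed.

Lemma sign_square (P : nat) : (-1) ^ P * (-1) ^ P = 1.
Proof. rewrite <- Rpow_mult_distr. replace (-1 * -1) with 1 by ring. apply pow1. Qed.

Lemma signed_young (s p q B : R) :
  s * s = 1 -> 0 < B -> s * p <= / (2 * B) * (p * p + q * q) + B / 2.
Proof.
  intros Hs HB.
  assert (Hsq : 0 <= (p - B * s) * (p - B * s)) by apply Rle_0_sqr.
  assert (0 <= q * q) by apply Rle_0_sqr.
  apply Rmult_le_reg_l with (2 * B); [lra |].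
  replace (2 * B * (/ (2 * B) * (p * p + q * q) + B / 2)) with (p * p + q * q + B * B)
    by (field; lra).
  replace ((p - B * s) * (p - B * s)) with (p * p - 2 * B * (s * p) + B * B * (s * s))
    in Hsq by ring.
  rewrite Hs in Hsq. lra.
Qed.

Section AlternatingSum.
Variables (H : HilbertSpace) (f : nat -> H).

Fixpoint alt_sum (N : nat) : H :=
  match N with
  | O => hs_zero
  | S N' => hs_add (alt_sum N') (hs_scal ((-1) ^ S N', 0) (f (S N')))
  end.

Lemma re_inner_alt_sum N z :
  re_inner H (alt_sum N) z = sumR (map (fun P => (-1) ^ P * re_inner H (f P) z) (seq 1 N)).
Proof.
  induction N as [|N IH]; simpl alt_sum.
  - unfold re_inner. rewrite inner_zero_l. reflexivity.
  - rewrite seq_S, map_app, sumR_app, <- IH, re_inner_add_l, re_inner_rscal_l.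
    replace (1 + N)%nat with (S N) by lia. simpl. ring.
Qed.

(* If f satisfies the Bessel inequality with bound B on 1..N, the signed sum
   of its first N terms has squared norm at most B N (instead of the trivial
   quadratic growth). *)
Lemma alt_sum_norm_bound B N : 0 < B ->
  (forall h, sumR (map (fun P => Cmod2 (hs_inner h (f P))) (seq 1 N)) <= B * hs_norm h ^ 2) ->
  re_inner H (alt_sum N) (alt_sum N) <= B * INR N.
Proof.
  intros HB Hbessel.
  set (g := alt_sum N).
  assert (Hterm : forall P, (-1) ^ P * re_inner H (f P) g
                            <= / (2 * B) * Cmod2 (hs_inner g (f P)) + B / 2).
  { intro P. rewrite re_inner_sym. unfold re_inner, Cmod2.
    apply signed_young; [apply sign_square | exact HB]. }
  pose proof (sumR_affine_bound _ _ _ _ (seq 1 N) Hterm) as Hsum.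
  rewrite <- re_inner_alt_sum, length_seq in Hsum. fold g in Hsum.
  specialize (Hbessel g).
  rewrite norm_re_inner, pow2_sqrt in Hbessel by apply re_inner_self_nonneg.
  assert (Hhalf : / (2 * B) * sumR (map (fun P => Cmod2 (hs_inner g (f P))) (seq 1 N))
          <= / (2 * B) * (B * re_inner H g g)).
  { apply Rmult_le_compat_l; [left; apply Rinv_0_lt_compat; lra | exact Hbessel]. }
  replace (/ (2 * B) * (B * re_inner H g g)) with (re_inner H g g / 2) in Hhalf
    by (field; lra).
  lra.
Qed.

End AlternatingSum.

Section PairedSequence.
Variables (H : HilbertSpace) (d : nat) (psi : Zd d -> H) (n0 : Zd d).

Definition paired (k : Zd d) : H := hs_add (psi k) (psi (zd_add k n0)).

Fixpoint orbit (k : Zd d) (P : nat) : Zd d :=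
  match P with O => k | S P' => zd_add (orbit k P') n0 end.

Lemma orbit_coord k P i : orbit k P i = (k i + Z.of_nat P * n0 i)%Z.
Proof.
  induction P as [|P IH].
  - simpl. lia.
  - change (orbit k (S P) i) with (zd_add (orbit k P) n0 i).
    unfold zd_add. rewrite IH, Nat2Z.inj_succ, Z.mul_succ_l. lia.
Qed.

Lemma orbit_injective k i : n0 i <> 0%Z -> Injective (orbit k).
Proof.
  intros Hi P P' E. apply (f_equal (fun g => g i)) in E.
  rewrite !orbit_coord in E.
  assert (Hmul : (Z.of_nat P * n0 i = Z.of_nat P' * n0 i)%Z) by lia.
  apply Z.mul_cancel_r in Hmul; [lia | exact Hi].
Qed.

(* Telescoping: psi_k - (-1)^P psi_(k+P n0) = sum_(Q<P) (-1)^Q phi_(k+Q n0). *)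
Lemma telescoping k P :
  in_closed_span H _ paired (hs_sub (psi k) (hs_scal ((-1) ^ P, 0) (psi (orbit k P)))).
Proof.
  induction P as [|P IH].
  - replace (hs_sub (psi k) (hs_scal ((-1) ^ 0, 0) (psi (orbit k 0))))
      with (lincomb paired []) by (simpl; vector_identity; ring).
    apply closed_span_lincomb.
  - replace (hs_sub (psi k) (hs_scal ((-1) ^ S P, 0) (psi (orbit k (S P)))))
      with (hs_add (hs_sub (psi k) (hs_scal ((-1) ^ P, 0) (psi (orbit k P))))
                   (hs_scal ((-1) ^ P, 0) (paired (orbit k P))))
      by (unfold paired; simpl orbit; vector_identity; ring).
    apply closed_span_add; [exact IH |].
    apply closed_span_scal, closed_span_generator.
Qed.

Lemma telescoping_sum k N :
  in_closed_span H _ paired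
    (hs_sub (hs_scal (INR N, 0) (psi k)) (alt_sum H (fun P => psi (orbit k P)) N)).
Proof.
  induction N as [|N IH].
  - replace (hs_sub (hs_scal (INR 0, 0) (psi k)) (alt_sum H (fun P => psi (orbit k P)) 0))
      with (lincomb paired []) by (simpl; vector_identity; ring).
    apply closed_span_lincomb.
  - replace (hs_sub (hs_scal (INR (S N), 0) (psi k)) (alt_sum H (fun P => psi (orbit k P)) (S N)))
      with (hs_add (hs_sub (hs_scal (INR N, 0) (psi k)) (alt_sum H (fun P => psi (orbit k P)) N))
                   (hs_sub (psi k) (hs_scal ((-1) ^ S N, 0) (psi (orbit k (S N))))))
      by (rewrite S_INR; simpl alt_sum; vector_identity; ring).
    apply closed_span_add; [exact IH | apply telescoping].
Qed.

(* For a nonzero shift, psi_k differs from the average (1/N) telescoping_sum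
   by (1/N) alt_sum, whose norm is at most sqrt (B/N) by the Bessel bound. *)
Lemma psi_in_closed_span_nonzero_shift k i :
  Bessel psi -> n0 i <> 0%Z -> in_closed_span H _ paired (psi k).
Proof.
  intros [B [HB Hbessel]] Hi.
  set (f := fun P => psi (orbit k P)).
  apply closed_span_limit. intros eps He.
  destruct (archimed_cor1 (eps * eps / B)) as [N [HNsmall HNpos]].
  { apply Rdiv_lt_0_compat; nra. }
  apply lt_0_INR in HNpos.
  exists (hs_scal (/ INR N, 0) (hs_sub (hs_scal (INR N, 0) (psi k)) (alt_sum H f N))).
  split; [apply closed_span_scal, telescoping_sum |].
  replace (hs_sub (psi k) (hs_scal (/ INR N, 0)
             (hs_sub (hs_scal (INR N, 0) (psi k)) (alt_sum H f N))))
    with (hs_scal (/ INR N, 0) (alt_sum H f N)) by (vector_identity; field; lra).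
  assert (Hbound : re_inner H (alt_sum H f N) (alt_sum H f N) <= B * INR N).
  { apply alt_sum_norm_bound; [exact HB |]. intro h.
    rewrite <- (map_map (orbit k) (fun j => Cmod2 (hs_inner h (psi j)))).
    apply Hbessel, Injective_map_NoDup; [apply (orbit_injective k i Hi) | apply seq_NoDup]. }
  (* ||(1/N) alt_sum||^2 <= B / N < eps^2. *)
  rewrite norm_re_inner, re_inner_scal_self. unfold Cmod2; simpl.
  rewrite <- (sqrt_square eps) by lra. apply sqrt_lt_1_alt. split.
  - apply Rmult_le_pos; [nra | apply re_inner_self_nonneg].
  - apply Rle_lt_trans with ((/ INR N * / INR N + 0 * 0) * (B * INR N)).
    + apply Rmult_le_compat_l; [nra | exact Hbound].
    + replace ((/ INR N * / INR N + 0 * 0) * (B * INR N)) with (B * / INR N)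
        by (field; lra).
      apply Rmult_lt_compat_l with (r := B) in HNsmall; [| exact HB].
      replace (B * (eps * eps / B)) with (eps * eps) in HNsmall by (field; lra).
      exact HNsmall.
Qed.

(* For the zero shift, phi_k = 2 psi_k. *)
Lemma psi_in_closed_span_zero_shift k :
  (forall i, n0 i = 0%Z) -> in_closed_span H _ paired (psi k).
Proof.
  intro Hzero.
  assert (Hk : zd_add k n0 = k).
  { apply functional_extensionality. intro i. unfold zd_add. rewrite Hzero. lia. }
  replace (psi k) with (hs_scal (/ 2, 0) (paired k))
    by (unfold paired; rewrite Hk; vector_identity; field).
  apply closed_span_scal, closed_span_generator.
Qed.

End PairedSequence.

Theorem mainTheorem13 (H : HilbertSpace) (d : nat) (hd : (1 <= d)%nat)
  (psi : Zd d -> H) (n0 : Zd d) :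
  Bessel psi -> complete_seq psi ->
  complete_seq (fun k : Zd d => hs_add (psi k) (psi (zd_add k n0))).
Proof.
  intros Hbessel Hcomplete.
  apply (complete_of_closed_span H _ _ psi (paired H d psi n0)); [| exact Hcomplete].
  intro k.
  destruct (classic (exists i, n0 i <> 0%Z)) as [[i Hi] | Hno].
  - exact (psi_in_closed_span_nonzero_shift H d psi n0 k i Hbessel Hi).
  - apply psi_in_closed_span_zero_shift. intro i.
    apply NNPP. intro Hi. apply Hno. exists i. exact Hi.
Qed.
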